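(* Let $G=\mathbb{R}\times\mathbb{C}$ be the model of $\widetilde{\mathrm{SL}}_2(\mathbb{R})$ described below, let $\eta>0$ and $C^+_\eta=\{(\xi,\zeta)\in\mathbb{R}\times\mathbb{C}:\xi^2\ge(\eta+1)|\zeta|^2,\ \xi\ge 0\}$, and let $\tau=dc$ be the differential of the first coordinate. Then for every $(c,w)\in G$ and every nonzero $v\in(L_{(c,w)})_*C^+_\eta$ we have $\tau_{(c,w)}(v)>0$, and there are constants $A,B>0$ (depending only on $\eta$) such that $\dfrac{|v|}{\tau_{(c,w)}(v)}\le A+B|w|$ for all such $(c,w)$ and $v$, where $|v|$ is the Euclidean norm on $\mathbb{R}\times\mathbb{C}\cong\mathbb{R}^3$.
   Context: $G=\mathbb{R}\times\mathbb{C}$ with identity $(0,0)$ and multiplication $(c_1,w_1)\cdot(c_2,w_2)=(c,w)$, $c=c_1+c_2+\arctan\frac{\operatorname{Im}(w_1\bar w_2e^{-i(c_1+c_2)})}{\sqrt{1+|w_1|^2}\sqrt{1+|w_2|^2}+\operatorname{Re}(w_1\bar w_2e^{-i(c_1+c_2)})}$, $w=w_2\sqrt{1+|w_1|^2}e^{ic_1}+w_1\sqrt{1+|w_2|^2}e^{-ic_2}$; this is the universal cover of $\mathrm{SU}_{1,1}\cong\mathrm{SL}_2(\mathbb{R})$. $L_{(c,w)}$ is left multiplication and $(L_{(c,w)})_*$ its differential at the identity, where tangent spaces are identified with $\mathbb{R}\times\mathbb{C}$ via the coordinates. *)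

From Stdlib Require Import Reals.
From Coquelicot Require Import Coquelicot.
Open Scope R_scope.

Definition cis (t : R) : C := (cos t, sin t).

(* The model G = R x C of the universal cover of SU(1,1) ~ SL_2(R). *)
Definition G := (R * C)%type.

Definition gmul (g1 g2 : G) : G :=
  let (c1, w1) := g1 in
  let (c2, w2) := g2 in
  let z := Cmult (Cmult w1 (Cconj w2)) (cis (- (c1 + c2))) in
  let s1 := sqrt (1 + Cmod w1 ^ 2) in
  let s2 := sqrt (1 + Cmod w2 ^ 2) in
  ( c1 + c2 + atan (Im z / (s1 * s2 + Re z)),
    Cplus (Cmult (Cmult w2 (RtoC s1)) (cis c1))
          (Cmult (Cmult w1 (RtoC s2)) (cis (- c2))) ).

Definition Lmul (g : G) : G -> G := fun h => gmul g h.

Definition gid : G := (0, RtoC 0).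

(* dL is the differential of L_g at the identity (Fréchet derivative, tangent
   spaces identified with R x C ~ R^3 via the coordinates). *)
Definition is_dL (g : G) (dL : G -> G) : Prop :=
  filterdiff (Lmul g) (locally gid) dL.

Definition cone (eta : R) (x : G) : Prop :=
  fst x ^ 2 >= (eta + 1) * Cmod (snd x) ^ 2 /\ fst x >= 0.

Definition tau (v : G) : R := fst v.

Definition eucl (v : G) : R := sqrt (fst v ^ 2 + Cmod (snd v) ^ 2).

From Stdlib Require Import Reals Lra Psatz.
From Coquelicot Require Import Coquelicot.
Open Scope R_scope.

(* The differential of L_(c,w) at the identity is explicit: with
   s = sqrt (1 + |w|^2) it maps (xi, zeta) to
   (xi + Im (w conj(zeta) e^(-ic)) / s, s e^(ic) zeta - i xi w).
   Since |w| <= s, its first coordinate differs from xi by at most |zeta|, and on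
   the cone |zeta| <= xi / sqrt (1 + eta), so tau is at least a fixed fraction of
   xi.  By the triangle inequality and s <= 1 + |w|, the Euclidean norm of the
   image is at most (3 + 2|w|) xi, whence the bound on the ratio. *)

Notation R3 := (prod_NormedModule R_AbsRing R_NormedModule
                  (prod_NormedModule R_AbsRing R_NormedModule R_NormedModule)).

Section FilterdiffRules.
Context {V : NormedModule R_AbsRing} (x : V).

Lemma filterdiff_const_eq (k : R) (L : V -> R) :
  (forall y, 0 = L y) -> filterdiff (fun _ => k) (locally x) L.
Proof.
intros HL; eapply filterdiff_ext_lin; [apply filterdiff_const | exact HL].
Qed.

Lemma filterdiff_linear_eq (f L : V -> R) :
  is_linear f -> (forall y, f y = L y) -> filterdiff f (locally x) L.
Proof.
intros Hf HL; eapply filterdiff_ext_lin; [apply filterdiff_linear, Hf | exact HL].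
Qed.

Lemma filterdiff_plus_eq (f g lf lg L : V -> R) :
  filterdiff f (locally x) lf -> filterdiff g (locally x) lg ->
  (forall y, lf y + lg y = L y) -> filterdiff (fun h => f h + g h) (locally x) L.
Proof.
intros Hf Hg HL; eapply filterdiff_ext_lin;
  [apply (filterdiff_plus_fct f g lf lg Hf Hg) | exact HL].
Qed.

Lemma filterdiff_minus_eq (f g lf lg L : V -> R) :
  filterdiff f (locally x) lf -> filterdiff g (locally x) lg ->
  (forall y, lf y - lg y = L y) -> filterdiff (fun h => f h - g h) (locally x) L.
Proof.
intros Hf Hg HL; eapply filterdiff_ext_lin;
  [apply (filterdiff_minus_fct f g lf lg Hf Hg) | exact HL].
Qed.

Lemma filterdiff_opp_eq (f lf L : V -> R) :
  filterdiff f (locally x) lf ->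
  (forall y, - lf y = L y) -> filterdiff (fun h => - f h) (locally x) L.
Proof.
intros Hf HL; eapply filterdiff_ext_lin; [apply (filterdiff_opp_fct f lf Hf) | exact HL].
Qed.

Lemma filterdiff_mult_eq (f g lf lg L : V -> R) :
  filterdiff f (locally x) lf -> filterdiff g (locally x) lg ->
  (forall y, lf y * g x + f x * lg y = L y) ->
  filterdiff (fun h => f h * g h) (locally x) L.
Proof.
intros Hf Hg HL; eapply filterdiff_ext_lin;
  [apply (filterdiff_mult_fct f g x lf lg Rmult_comm Hf Hg) | exact HL].
Qed.

Lemma filterdiff_comp_eq (f lf L : V -> R) (phi : R -> R) (d : R) :
  filterdiff f (locally x) lf -> is_derive phi (f x) d ->
  (forall y, lf y * d = L y) -> filterdiff (fun h => phi (f h)) (locally x) L.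
Proof.
intros Hf Hphi HL; eapply filterdiff_ext_lin;
  [apply (filterdiff_comp' f phi x lf (fun y => scal y d) Hf Hphi) | exact HL].
Qed.

Lemma filterdiff_div_eq (f g lf lg L : V -> R) :
  filterdiff f (locally x) lf -> filterdiff g (locally x) lg -> g x <> 0 ->
  (forall y, lf y * / g x + f x * (lg y * (- 1 / g x ^ 2)) = L y) ->
  filterdiff (fun h => f h / g h) (locally x) L.
Proof.
intros Hf Hg Hgx HL.
apply (filterdiff_mult_eq f (fun h => / g h) lf (fun y => lg y * (- 1 / g x ^ 2)));
  [exact Hf | | exact HL].
apply (filterdiff_comp_eq g lg _ (fun y => / y) (- 1 / g x ^ 2)); [exact Hg | | reflexivity].
auto_derive; [exact Hgx | field; exact Hgx].
Qed.

Lemma filterdiff_pair {W1 W2 : NormedModule R_AbsRing} (f1 : V -> W1) (f2 : V -> W2) l1 l2 :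
  filterdiff f1 (locally x) l1 -> filterdiff f2 (locally x) l2 ->
  filterdiff (fun h => (f1 h, f2 h) : prod_NormedModule R_AbsRing W1 W2) (locally x)
    (fun y => (l1 y, l2 y) : prod_NormedModule R_AbsRing W1 W2).
Proof.
intros H1 H2; apply (filterdiff_comp'_2 f1 f2 pair x l1 l2 pair H1 H2).
apply filterdiff_linear, (is_linear_prod (fun t => fst t) (fun t => snd t));
  [apply is_linear_fst | apply is_linear_snd].
Qed.

End FilterdiffRules.

Lemma is_linear_fst_snd : is_linear (fun u : R3 => fst (snd u)).
Proof. apply (is_linear_comp (fun t : R3 => snd t)); [apply is_linear_snd | apply is_linear_fst]. Qed.

Lemma is_linear_snd_snd : is_linear (fun u : R3 => snd (snd u)).
Proof. apply (is_linear_comp (fun t : R3 => snd t)); [apply is_linear_snd | apply is_linear_snd]. Qed.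

(* Builds the derivative of an explicit real expression in the coordinates of
   [R3], leaving side conditions (nonzero denominators, positive radicands). *)
Ltac auto_filterdiff :=
  lazymatch goal with
  | |- filterdiff (fun _ => ?k) _ _ => apply filterdiff_const_eq; intro; reflexivity
  | |- filterdiff (fun h => fst h) _ _ =>
      apply filterdiff_linear_eq; [apply is_linear_fst | intro; reflexivity]
  | |- filterdiff (fun h => fst (snd h)) _ _ =>
      apply filterdiff_linear_eq; [apply is_linear_fst_snd | intro; reflexivity]
  | |- filterdiff (fun h => snd (snd h)) _ _ =>
      apply filterdiff_linear_eq; [apply is_linear_snd_snd | intro; reflexivity]
  | |- filterdiff (fun h => @?f h + @?g h) _ _ =>
      eapply (filterdiff_plus_eq _ f g); [auto_filterdiff | auto_filterdiff | intro; reflexivity]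
  | |- filterdiff (fun h => @?f h - @?g h) _ _ =>
      eapply (filterdiff_minus_eq _ f g); [auto_filterdiff | auto_filterdiff | intro; reflexivity]
  | |- filterdiff (fun h => @?f h * @?g h) _ _ =>
      eapply (filterdiff_mult_eq _ f g); [auto_filterdiff | auto_filterdiff | intro; reflexivity]
  | |- filterdiff (fun h => @?f h / @?g h) _ _ =>
      eapply (filterdiff_div_eq _ f g); [auto_filterdiff | auto_filterdiff | | intro; reflexivity]
  | |- filterdiff (fun h => - @?f h) _ _ =>
      eapply (filterdiff_opp_eq _ f); [auto_filterdiff | intro; reflexivity]
  | |- filterdiff (fun h => atan (@?f h)) _ _ =>
      eapply (filterdiff_comp_eq _ f _ _ atan); [auto_filterdiff | apply is_derive_atan | intro; reflexivity]
  | |- filterdiff (fun h => cos (@?f h)) _ _ =>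
      eapply (filterdiff_comp_eq _ f _ _ cos); [auto_filterdiff | apply is_derive_cos | intro; reflexivity]
  | |- filterdiff (fun h => sin (@?f h)) _ _ =>
      eapply (filterdiff_comp_eq _ f _ _ sin); [auto_filterdiff | apply is_derive_sin | intro; reflexivity]
  | |- filterdiff (fun h => sqrt (@?f h)) _ _ =>
      eapply (filterdiff_comp_eq _ f _ _ sqrt); [auto_filterdiff | apply filterdiff_sqrt | intro; reflexivity]
  end.

Lemma is_derive_filterdiff_dir {V W : NormedModule R_AbsRing} (f l : V -> W)
    (pi : W -> R) (v : V) :
  is_linear pi -> filterdiff f (locally (zero : V)) l ->
  is_derive (fun t => pi (f (scal t v))) 0 (pi (l v)).
Proof.
intros Hpi Hf; unfold is_derive; eapply filterdiff_ext_lin.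
- apply (filterdiff_comp' (fun t : R_AbsRing => scal t v) (fun u => pi (f u)) 0
           (fun t => scal t v) (fun u => pi (l u))).
  + apply filterdiff_scal_l.
  + apply (filterdiff_comp' f pi); [| apply filterdiff_linear, Hpi].
    assert (Hz : scal (0 : R_AbsRing) v = zero) by exact (scal_zero_l (K := R_AbsRing) v).
    now rewrite Hz.
- intro t; destruct Hf as [Hl _]; cbn.
  now rewrite (linear_scal l Hl), (linear_scal pi Hpi).
Qed.

Lemma filterdiff_R3_unique {V : NormedModule R_AbsRing} (f l1 l2 : V -> R3) :
  filterdiff f (locally (zero : V)) l1 -> filterdiff f (locally (zero : V)) l2 ->
  forall v, l1 v = l2 v.
Proof.
intros H1 H2 v.
assert (Hpi : forall pi : R3 -> R, is_linear pi -> pi (l1 v) = pi (l2 v)).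
{ intros pi Hpi.
  rewrite <- (is_derive_unique _ _ _ (is_derive_filterdiff_dir f l1 pi v Hpi H1)).
  exact (is_derive_unique _ _ _ (is_derive_filterdiff_dir f l2 pi v Hpi H2)). }
pose proof (Hpi _ is_linear_fst) as E1.
pose proof (Hpi _ is_linear_fst_snd) as E2.
pose proof (Hpi _ is_linear_snd_snd) as E3.
destruct (l1 v) as [? [? ?]], (l2 v) as [? [? ?]]; cbn in *; congruence.
Qed.

Lemma Cmod_pair_sq (a b : R) : Cmod (a, b) ^ 2 = a * a + b * b.
Proof. rewrite Cmod2_alt; simpl; ring. Qed.

Lemma Cmod_cis (t : R) : Cmod (cis t) = 1.
Proof.
unfold Cmod, cis; cbn; rewrite !Rmult_1_r, Rplus_comm.
pose proof (sin2_cos2 t) as E; unfold Rsqr in E; rewrite E; apply sqrt_1.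
Qed.

Lemma Rabs_Im_le_Cmod (z : C) : Rabs (Im z) <= Cmod z.
Proof. eapply Rle_trans; [apply Rmax_r | apply Rmax_Cmod]. Qed.

Lemma eucl_le_Rabs_Cmod (v : G) : eucl v <= Rabs (fst v) + Cmod (snd v).
Proof.
pose proof (Rabs_pos (fst v)); pose proof (Cmod_ge_0 (snd v)).
unfold eucl; rewrite <- (sqrt_pow2 (Rabs (fst v) + Cmod (snd v))) by lra.
apply sqrt_le_1_alt; rewrite <- (pow2_abs (fst v)); nra.
Qed.

Definition hnorm (w : C) : R := sqrt (1 + Cmod w ^ 2).

Lemma hnorm_pair (a b : R) : hnorm (a, b) = sqrt (1 + (a * a + b * b)).
Proof. unfold hnorm; now rewrite Cmod_pair_sq. Qed.

Lemma hnorm_pos (w : C) : 0 < hnorm w.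
Proof. apply sqrt_lt_R0; pose proof (pow2_ge_0 (Cmod w)); lra. Qed.

Lemma Cmod_le_hnorm (w : C) : Cmod w <= hnorm w.
Proof.
rewrite <- (sqrt_pow2 (Cmod w)) by apply Cmod_ge_0.
apply sqrt_le_1_alt; lra.
Qed.

Lemma hnorm_le (w : C) : hnorm w <= 1 + Cmod w.
Proof.
pose proof (Cmod_ge_0 w).
rewrite <- (sqrt_pow2 (1 + Cmod w)) by lra.
apply sqrt_le_1_alt; nra.
Qed.

Definition lmul_coords (c p q t a b : R) : G :=
  let s := hnorm (p, q) in
  let r := sqrt (1 + (a * a + b * b)) in
  let u := p * a + q * b in
  let v := q * a - p * b in
  (c + t + atan ((u * sin (- (c + t)) + v * cos (- (c + t)))
                 / (s * r + (u * cos (- (c + t)) - v * sin (- (c + t))))),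
   (s * (a * cos c - b * sin c) + r * (p * cos (- t) - q * sin (- t)),
    s * (a * sin c + b * cos c) + r * (p * sin (- t) + q * cos (- t)))).

Lemma Lmul_coords (c p q t a b : R) :
  Lmul (c, (p, q)) (t, (a, b)) = lmul_coords c p q t a b.
Proof.
unfold Lmul, gmul, lmul_coords, hnorm, cis; rewrite !Cmod_pair_sq.
unfold Cmult, Cplus, Cconj, RtoC; simpl.
f_equal; [do 3 f_equal | f_equal]; ring.
Qed.

Definition dLmul (g v : G) : G :=
  let (c, w) := g in
  let (xi, zeta) := v in
  (xi + Im (w * Cconj zeta * cis (- c)) / hnorm w,
   (hnorm w * zeta * cis c - Ci * xi * w)%C).

Lemma filterdiff_lmul_coords (c p q : R) :
  filterdiff (fun h : R3 => lmul_coords c p q (fst h) (fst (snd h)) (snd (snd h)) : R3)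
    (locally gid) (dLmul (c, (p, q))).
Proof.
pose proof (hnorm_pos (p, q)) as Hs.
assert (E1 : 1 + (0 * 0 + 0 * 0) = 1) by ring.
unfold lmul_coords; cbv beta zeta.
eapply filterdiff_ext_lin.
{ apply (filterdiff_pair (V := R3)); [| apply filterdiff_pair]; auto_filterdiff.
  all: cbn; rewrite ?E1, ?sqrt_1, ?Rplus_0_r, ?Ropp_0, ?sin_0, ?cos_0; try lra. }
intros [t [a b]]; unfold dLmul, cis, Rsqr, Cminus, Cplus, Copp, Cmult, Ci, RtoC; cbn.
rewrite ?E1, ?sqrt_1, ?Rplus_0_r, ?Ropp_0, ?sin_0, ?cos_0.
f_equal; [field | f_equal; field]; lra.
Qed.

Lemma is_dL_dLmul (g : G) : is_dL g (dLmul g).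
Proof.
destruct g as [c [p q]]; unfold is_dL.
eapply filterdiff_ext; [| apply filterdiff_lmul_coords].
intros [t [a b]]; symmetry; apply Lmul_coords.
Qed.

Lemma is_dL_unique (g : G) (dL : G -> G) : is_dL g dL -> forall v, dL v = dLmul g v.
Proof. intro H; exact (filterdiff_R3_unique _ _ _ H (is_dL_dLmul g)). Qed.

Lemma dLmul_origin (g : G) : dLmul g (0, RtoC 0) = gid.
Proof.
destruct g as [c [p q]]; unfold dLmul, gid, Cminus, Cplus, Copp, Cmult, Cconj, Ci, RtoC; cbn.
f_equal; [| f_equal]; field; apply Rgt_not_eq, hnorm_pos.
Qed.

Lemma Rabs_tau_dLmul_sub_le (g : G) (xi : R) (zeta : C) :
  Rabs (tau (dLmul g (xi, zeta)) - xi) <= Cmod zeta.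
Proof.
destruct g as [c w]; cbv beta iota delta [dLmul tau fst].
pose proof (hnorm_pos w) as Hs.
match goal with |- Rabs (xi + ?J - xi) <= _ => replace (xi + J - xi) with J by ring end.
rewrite Rabs_div, (Rabs_pos_eq (hnorm w)) by lra.
apply Rle_div_l; [exact Hs |].
eapply Rle_trans; [apply Rabs_Im_le_Cmod |].
rewrite !Cmod_mult, Cmod_conj, Cmod_cis, Rmult_1_r, Rmult_comm.
apply Rmult_le_compat_l; [apply Cmod_ge_0 | apply Cmod_le_hnorm].
Qed.

Lemma Cmod_snd_dLmul_le (g : G) (xi : R) (zeta : C) : 0 <= xi ->
  Cmod (snd (dLmul g (xi, zeta))) <= hnorm (snd g) * Cmod zeta + xi * Cmod (snd g).
Proof.
destruct g as [c w]; cbv beta iota delta [dLmul fst snd]; intro Hxi.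
unfold Cminus; eapply Rle_trans; [apply Cmod_triangle |].
rewrite Cmod_opp, !Cmod_mult, Cmod_cis, Cmod_Ci, !Cmod_R, Rmult_1_r, Rmult_1_l.
rewrite (Rabs_pos_eq _ (Rlt_le _ _ (hnorm_pos w))), (Rabs_pos_eq xi Hxi).
apply Rle_refl.
Qed.

Definition cone_gap (eta : R) : R := eta / (2 * (1 + eta)).

Lemma cone_gap_pos (eta : R) : 0 < eta -> 0 < cone_gap eta < 1.
Proof. intro; unfold cone_gap; split; [apply Rdiv_lt_0_compat | apply Rlt_div_l]; lra. Qed.

(* [1 - cone_gap eta = (2 + eta) / (2 (1 + eta))] is a rational upper bound for
   [1 / sqrt (1 + eta)], the slope of the cone. *)
Lemma cone_Cmod_le (eta xi : R) (zeta : C) : 0 < eta -> cone eta (xi, zeta) ->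
  Cmod zeta <= (1 - cone_gap eta) * xi.
Proof.
intros Heta [Hcone Hxi]; cbn in Hcone, Hxi.
set (th := 1 - cone_gap eta).
assert (Hth : th * (2 * (1 + eta)) = 2 + eta) by (unfold th, cone_gap; field; lra).
assert (Hth2 : 1 <= th ^ 2 * (1 + eta)).
{ apply (Rmult_le_reg_r (4 * (1 + eta))); [lra |].
  replace (th ^ 2 * (1 + eta) * (4 * (1 + eta))) with ((th * (2 * (1 + eta))) ^ 2) by ring.
  rewrite Hth; nra. }
pose proof (Cmod_ge_0 zeta); pose proof (cone_gap_pos eta Heta).
assert (0 < th) by (unfold th; lra).
assert (Hsq : Cmod zeta ^ 2 <= (th * xi) ^ 2).
{ apply (Rmult_le_reg_l (1 + eta)); [lra |].
  assert (xi ^ 2 <= th ^ 2 * (1 + eta) * xi ^ 2)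
    by (rewrite <- (Rmult_1_l (xi ^ 2)) at 1; apply Rmult_le_compat_r; [nra | lra]).
  nra. }
apply Rsqr_incr_0_var; [rewrite !Rsqr_pow2; exact Hsq | apply Rmult_le_pos; lra].
Qed.

Section ConeEstimates.
Variables (eta : R) (g : G) (xi : R) (zeta : C).
Hypotheses (Heta : 0 < eta) (Hcone : cone eta (xi, zeta)).

Lemma cone_fst_pos : dLmul g (xi, zeta) <> gid -> 0 < xi.
Proof.
intro Hne; destruct Hcone as [_ Hxi]; cbn in Hxi.
destruct (Rle_lt_or_eq_dec 0 xi) as [| <-]; [lra | trivial |].
exfalso; apply Hne.
pose proof (cone_Cmod_le eta 0 zeta Heta Hcone) as Hz; rewrite Rmult_0_r in Hz.
assert (Hzeta : zeta = RtoC 0) by (apply Cmod_eq_0, Rle_antisym; [exact Hz | apply Cmod_ge_0]).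
now rewrite Hzeta, dLmul_origin.
Qed.

Lemma tau_dLmul_cone_ge : cone_gap eta * xi <= tau (dLmul g (xi, zeta)).
Proof.
pose proof (Rabs_tau_dLmul_sub_le g xi zeta) as Hnear.
pose proof (Rle_abs (- (tau (dLmul g (xi, zeta)) - xi))) as Habs.
rewrite Rabs_Ropp in Habs.
pose proof (cone_Cmod_le eta xi zeta Heta Hcone); lra.
Qed.

Lemma eucl_dLmul_cone_le : eucl (dLmul g (xi, zeta)) <= (3 + 2 * Cmod (snd g)) * xi.
Proof.
destruct Hcone as [_ Hxi]; cbn in Hxi.
pose proof (cone_Cmod_le eta xi zeta Heta Hcone) as Hz.
pose proof (cone_gap_pos eta Heta).
pose proof (Cmod_ge_0 zeta); pose proof (Cmod_ge_0 (snd g)).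
pose proof (hnorm_le (snd g)) as Hs.
pose proof (Cmod_snd_dLmul_le g xi zeta ltac:(lra)) as Hsnd.
pose proof (Rabs_tau_dLmul_sub_le g xi zeta) as Hnear.
pose proof (Rabs_triang (tau (dLmul g (xi, zeta)) - xi) xi) as Htri.
replace (tau (dLmul g (xi, zeta)) - xi + xi) with (tau (dLmul g (xi, zeta))) in Htri by ring.
rewrite (Rabs_pos_eq xi) in Htri by lra.
eapply Rle_trans; [apply eucl_le_Rabs_Cmod |]; unfold tau in *.
assert (Cmod zeta <= xi) by nra.
assert (hnorm (snd g) * Cmod zeta <= (1 + Cmod (snd g)) * xi).
{ apply Rmult_le_compat; [apply Rlt_le, hnorm_pos | apply Cmod_ge_0 | exact Hs | lra]. }
nra.
Qed.

Lemma dLmul_cone_ratio_le : dLmul g (xi, zeta) <> gid ->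
  eucl (dLmul g (xi, zeta)) / tau (dLmul g (xi, zeta))
    <= 3 / cone_gap eta + 2 / cone_gap eta * Cmod (snd g).
Proof.
intro Hne; pose proof (cone_fst_pos Hne).
pose proof (cone_gap_pos eta Heta) as [Hk _].
pose proof tau_dLmul_cone_ge as Htau; pose proof eucl_dLmul_cone_le as Heucl.
pose proof (Cmod_ge_0 (snd g)).
apply Rle_div_l; [nra |].
replace (3 / cone_gap eta + 2 / cone_gap eta * Cmod (snd g))
  with ((3 + 2 * Cmod (snd g)) / cone_gap eta) by (field; lra).
eapply Rle_trans; [exact Heucl |].
replace ((3 + 2 * Cmod (snd g)) * xi)
  with ((3 + 2 * Cmod (snd g)) / cone_gap eta * (cone_gap eta * xi)) by (field; lra).
apply Rmult_le_compat_l; [apply Rdiv_le_0_compat; lra | exact Htau].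
Qed.

End ConeEstimates.

Theorem mainTheorem9 (eta : R) (heta : 0 < eta) :
  (forall g : G, exists dL : G -> G, is_dL g dL) /\
  (forall (g : G) (dL : G -> G), is_dL g dL ->
     forall x : G, cone eta x -> dL x <> gid -> tau (dL x) > 0) /\
  (exists A B : R, 0 < A /\ 0 < B /\
     forall (g : G) (dL : G -> G), is_dL g dL ->
       forall x : G, cone eta x -> dL x <> gid ->
         eucl (dL x) / tau (dL x) <= A + B * Cmod (snd g)).
Proof.
pose proof (cone_gap_pos eta heta) as [Hk _].
split; [| split].
- intro g; exists (dLmul g); apply is_dL_dLmul.
- intros g dL HdL [xi zeta] Hcone Hne; rewrite (is_dL_unique g dL HdL) in *.
  pose proof (cone_fst_pos eta g xi zeta heta Hcone Hne).
  pose proof (tau_dLmul_cone_ge eta g xi zeta heta Hcone).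
  nra.
- exists (3 / cone_gap eta), (2 / cone_gap eta).
  split; [| split]; [apply Rdiv_lt_0_compat; lra | apply Rdiv_lt_0_compat; lra |].
  intros g dL HdL [xi zeta] Hcone Hne; rewrite (is_dL_unique g dL HdL) in *.
  exact (dLmul_cone_ratio_le eta g xi zeta heta Hcone Hne).
Qed.
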